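(* Let $n \ge k \ge 1$ and let $n_1 \le n_2 \le \cdots \le n_k$ be positive integers summing to $n$. Let $G = G(n_1,\ldots,n_k)$ and, for each $i$, let $P_i$ be the directed path $v_{i,1} \to v_{i,2} \to \cdots \to v_{i,n_i}$. Then the digraph $D(G,P_1,\ldots,P_k)$ is acyclic.
   Context: The graph $G(n_1,\ldots,n_k)$: for each $1 \le i \le k$ it contains a path on vertices $v_{i,1},\ldots,v_{i,n_i}$ (edges $v_{i,a}v_{i,a+1}$ for $1 \le a < n_i$), all vertices distinct, and additionally, for each $1 \le i < j \le k$: (i) if $n_i > 1$, the edge $v_{i,a}v_{j,a}$ for each $1 \le a < n_i$; (ii) if $n_j > 1$, the edge $v_{i,a+1}v_{j,a}$ for each $1 \le a < n_i$; (iii) the edge $v_{i,n_i}v_{j,a}$ for each $n_i \le a \le n_j$. For a graph $G$ with vertex-disjoint directed paths $P_1,\ldots,P_k$ covering $V(G)$, the digraph $D(G,P_1,\ldots,P_k)$ has vertex set $V(G)$, and for distinct $x,y$ there is an arc $x \to y$ iff either some $P_j$ contains the arc $x \to y$, or there is a vertex $z$ and a path $P_j$ with $x \to z$ an arc of $P_j$ and $y$ adjacent to $z$ in $G$. Acyclic means no directed cycle. *)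

From Stdlib Require List.
From mathcomp Require Import all_boot.
Set Implicit Arguments. Unset Strict Implicit. Unset Printing Implicit Defensive.

(* Vertices of G(n_1,...,n_k) are pairs (i,a) : nat * nat standing for v_{i,a},
   1 <= i <= k, 1 <= a <= n_i.  The sequence ns = [:: n_1; ...; n_k]. *)
Definition nn (ns : seq nat) (i : nat) : nat := nth 0 ns i.-1.

Definition Gvtx (ns : seq nat) (x : nat * nat) : bool :=
  (1 <= x.1 <= size ns) && (1 <= x.2 <= nn ns x.1).

(* One orientation of the edges of G(n_1,...,n_k). *)
Definition Gedge (ns : seq nat) (x y : nat * nat) : bool :=
  [&& Gvtx ns x, Gvtx ns y &
    (* path edges v_{i,a} v_{i,a+1}, 1 <= a < n_i *)
    [&& x.1 == y.1, y.2 == x.2.+1 & x.2 < nn ns x.1]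
    || ((x.1 < y.1) &&
        (* x = v_{i,.}, y = v_{j,.}, i < j *)
        [|| (* (i) v_{i,a} v_{j,a}, 1 <= a < n_i, if n_i > 1 *)
            [&& 1 < nn ns x.1, x.2 == y.2 & 1 <= x.2 < nn ns x.1],
            (* (ii) v_{i,a+1} v_{j,a}, 1 <= a < n_i, if n_j > 1 *)
            [&& 1 < nn ns y.1, x.2 == y.2.+1 & 1 <= y.2 < nn ns x.1]
          | (* (iii) v_{i,n_i} v_{j,a}, n_i <= a <= n_j *)
            [&& x.2 == nn ns x.1 & nn ns x.1 <= y.2 <= nn ns y.1]])].

Definition Gadj (ns : seq nat) (x y : nat * nat) : bool :=
  Gedge ns x y || Gedge ns y x.

Definition Ppath (ns : seq nat) (i : nat) : seq (nat * nat) :=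
  [seq (i, a) | a <- iota 1 (nn ns i)].
Definition Ppaths (ns : seq nat) : seq (seq (nat * nat)) :=
  [seq Ppath ns i | i <- iota 1 (size ns)].

Definition path_arc {T : Type} (P : seq T) (x z : T) : Prop :=
  exists p1 p2, P = p1 ++ x :: z :: p2.

Definition D_arc {T : Type} (V : T -> Prop) (adj : T -> T -> Prop)
    (Ps : seq (seq T)) (x y : T) : Prop :=
  V x /\ V y /\ x <> y /\
  ((exists P, List.In P Ps /\ path_arc P x y) \/
   (exists z P, List.In P Ps /\ path_arc P x z /\ adj y z)).

Fixpoint dwalk {T : Type} (R : T -> T -> Prop) (x : T) (p : seq T) : Prop :=
  match p with
  | [::] => True
  | y :: q => R x y /\ dwalk R y q
  end.

Definition acyclic {T : Type} (R : T -> T -> Prop) : Prop :=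
  ~ exists (x : T) (p : seq T), p <> [::] /\ dwalk R x p /\ last x p = x.

From mathcomp Require Import all_boot zify.
Set Implicit Arguments. Unset Strict Implicit.

(** Order the vertices v_{i,a} by position a, ties broken by path index i.
   Every arc of D leaves a vertex that is not the end of its path, and an arc
   into a vertex that is not the end of its path goes up in this order.  On a
   directed cycle every vertex has an outgoing arc, so the order would
   increase all the way around the cycle. *)

Lemma path_arc_nth (T : Type) (x0 : T) (s : seq T) (x z : T) :
  path_arc s x z ->
  exists2 i, i.+1 < size s & x = nth x0 s i /\ z = nth x0 s i.+1.
Proof.
move=> [p1 [p2 ->]]; exists (size p1); first by rewrite size_cat /=; lia.
by rewrite !nth_cat ltnn subnn ltnNge leqnSn subSnn.
Qed.

Lemma Ppaths_arc (ns : seq nat) (P : seq (nat * nat)) (x z : nat * nat) :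
  List.In P (Ppaths ns) -> path_arc P x z ->
  z = (x.1, x.2.+1) /\ x.2 < nn ns x.1.
Proof.
move=> /List.in_map_iff [i [<- _]] /(path_arc_nth (0, 0)) [a].
rewrite /Ppath size_map size_iota => lt_a [-> ->].
by rewrite !(nth_map 0) ?size_iota ?nth_iota // ?(ltnW lt_a) //=; lia.
Qed.

Section Edges.

Variable ns : seq nat.

Lemma Gedge_head_pos (u v : nat * nat) :
  Gedge ns u v -> u.2 <= v.2 \/ (u.2 = v.2.+1 /\ u.1 < v.1).
Proof.
case/and3P=> _ _ /orP[/and3P[_ /eqP-> _] | /andP[lt_uv]]; first by left.
case/or3P=> [/and3P[_ /eqP-> _] | /and3P[_ /eqP-> _] | /andP[/eqP-> /andP[le_uv _]]].
- by left.
- by right; split.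
- by left.
Qed.

Lemma Gedge_tail_pos (u v : nat * nat) :
  Gedge ns u v -> [\/ v = (u.1, u.2.+1), v.2 <= u.2 | u.2 = nn ns u.1].
Proof.
case/and3P=> _ _ /orP[/and3P[/eqP eq_row /eqP eq_pos _] | /andP[_]].
  by apply: Or31; case: v eq_row eq_pos => j c /= <- <-.
case/or3P=> [/and3P[_ /eqP-> _] | /and3P[_ /eqP-> _] | /andP[/eqP-> _]].
- by apply: Or32.
- by apply: Or32.
- by apply: Or33.
Qed.

End Edges.

Definition colex_lt (x y : nat * nat) : bool :=
  (x.2 < y.2) || (x.2 == y.2) && (x.1 < y.1).

Lemma colex_lt_irr : irreflexive colex_lt.
Proof. by move=> x; rewrite /colex_lt ltnn eqxx ltnn. Qed.

Lemma colex_lt_trans : transitive colex_lt.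
Proof. by move=> y x z; rewrite /colex_lt; lia. Qed.

Local Notation DG ns :=
  (D_arc (fun x => Gvtx ns x) (fun x y => Gadj ns x y) (Ppaths ns)).

Lemma DG_arc_tail (ns : seq nat) (x y : nat * nat) :
  DG ns x y -> x.2 < nn ns x.1.
Proof.
by move=> [_ [_ [_ [[P [inP /(Ppaths_arc inP) []]] | [z [P [inP [/(Ppaths_arc inP) []]]]]]]]].
Qed.

Lemma DG_arc_colex_lt (ns : seq nat) (x y : nat * nat) :
  DG ns x y -> y.2 < nn ns y.1 -> colex_lt x y.
Proof.
case: x => i a /= [_ [_ [neq_xy arc_xy]]] y_inner.
case: arc_xy => [[P [inP /(Ppaths_arc inP) [-> _]]] | ].
  by rewrite /colex_lt /= ltnSn.
move=> [z [P [inP [/(Ppaths_arc inP) [-> _] /orP[]]]]].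
- case/Gedge_tail_pos=> [y_eq | le_a | y_end]; rewrite /colex_lt /=.
  + by case: y y_eq {y_inner} neq_xy => j c /= [-> ->].
  + by move: le_a => /=; lia.
  + by move: y_end y_inner; lia.
- by case/Gedge_head_pos; rewrite /colex_lt /=; lia.
Qed.

Section RankedAcyclic.

Variables (T : Type) (R : T -> T -> Prop) (inner : T -> Prop) (lt : rel T).
Hypotheses (lt_irr : irreflexive lt) (lt_trans : transitive lt).
Hypothesis R_tail : forall x y, R x y -> inner x.
Hypothesis R_lt : forall x y, R x y -> inner y -> lt x y.

Lemma dwalk_lt_last (x : T) (p : seq T) :
  dwalk R x p -> p <> [::] -> inner (last x p) -> lt x (last x p).
Proof.
elim: p x => [// | y q IHq] x /= [Rxy walk_q] _ inner_last.
case: q IHq walk_q inner_last => [| w q] IHq walk_q inner_last; first exact: R_lt.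
apply: (lt_trans (R_lt Rxy _)); last exact: IHq.
by case: walk_q => /R_tail.
Qed.

Lemma acyclic_of_rank : acyclic R.
Proof.
move=> [x [p [p_nonnil [walk_p last_x]]]].
have := dwalk_lt_last walk_p p_nonnil.
case: p p_nonnil walk_p last_x => [// | y q] _ walk_p last_x.
by rewrite last_x lt_irr; case: walk_p => /R_tail inner_x _ /(_ inner_x).
Qed.

End RankedAcyclic.

Theorem lemma3 (n k : nat) (ns : seq nat) :
  size ns = k -> 1 <= k -> k <= n ->
  all (fun m => 0 < m) ns -> sorted leq ns -> sumn ns = n ->
  acyclic (D_arc (fun x => Gvtx ns x) (fun x y => Gadj ns x y) (Ppaths ns)).
Proof.
move=> _ _ _ _ _ _.
exact: (acyclic_of_rank colex_lt_irr colex_lt_trans (@DG_arc_tail ns) (@DG_arc_colex_lt ns)).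
Qed.
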